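(* Let $q$ be a prime power, $\alpha$ a primitive element of $\mathbb{F}_q$, and let $P$ be the $(q-1)\times(q-1)$ matrix over $\mathbb{F}_q$ with rows and columns indexed by $0,1,\dots,q-2$, defined by $P(s,s)=0$ and $P(s,t)=\dfrac{\alpha^s}{\alpha^s-\alpha^t}$ for $s\neq t$. Then every $2\times 2$ submatrix of $P$ is invertible. *)

From mathcomp Require Import all_boot all_algebra all_field.
Set Implicit Arguments. Unset Strict Implicit. Unset Printing Implicit Defensive.
Import GRing.Theory.
Local Open Scope ring_scope.

Definition Pmx (F : fieldType) (n : nat) (a : F) : 'M[F]_n :=
  \matrix_(s < n, t < n) (if s == t then 0 else a ^+ s / (a ^+ s - a ^+ t)).

(* Write x_s = alpha^s.  The diagonal zeros of P are exactly the junk values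
   x_s / (x_s - x_s) = x_s * 0^-1 = 0, so P is the Cauchy-like matrix
   x_s / (x_s - x_t).  Its 2x2 minor on rows x1, x2 and columns y1, y2 is
   x1 x2 ((a b)^-1 - (c d)^-1) with a = x1 - y1, b = x2 - y2, c = x1 - y2,
   d = x2 - y1, and a b - c d = (x1 - x2) (y1 - y2) is nonzero; since inversion
   is injective the minor is nonzero, whether or not a diagonal entry occurs. *)
From mathcomp Require Import all_boot all_algebra all_field.
From mathcomp Require Import ring.
Import GRing.Theory.
Local Open Scope ring_scope.

Lemma det_mx22 (R : comPzRingType) (A : 'M[R]_2) :
  \det A = A 0 0 * A 1 1 - A 0 1 * A 1 0.
Proof.
rewrite (expand_det_row _ ord0) !big_ord_recl big_ord0 addr0.
rewrite /cofactor !det_mx11 !mxE /= expr0 expr1 mul1r mulN1r mulrN.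
have -> : lift 0 (0 : 'I_1) = 1 :> 'I_2 by apply: val_inj.
by have -> : lift 1 (0 : 'I_1) = 0 :> 'I_2 by apply: val_inj.
Qed.

Lemma PmxE (F : fieldType) (n : nat) (a : F) :
  Pmx n a = \matrix_(s < n, t < n) (a ^+ s / (a ^+ s - a ^+ t)).
Proof.
apply/matrixP => s t; rewrite !mxE.
by case: eqP => // ->; rewrite subrr invr0 mulr0.
Qed.

Lemma det_mx22_div_sub_neq0 (F : fieldType) (x y : 'I_2 -> F) :
  injective x -> injective y -> (forall i, x i != 0) ->
  \det (\matrix_(i, j) (x i / (x i - y j))) != 0.
Proof.
move=> x_inj y_inj x_neq0.
have x01 : x 0 - x 1 != 0 by rewrite subr_eq0 (inj_eq x_inj).
have y01 : y 0 - y 1 != 0 by rewrite subr_eq0 (inj_eq y_inj).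
set a := x 0 - y 0; set b := x 1 - y 1; set c := x 0 - y 1; set d := x 1 - y 0.
have -> : \det (\matrix_(i, j) (x i / (x i - y j))) =
    x 0 * x 1 * ((a * b)^-1 - (c * d)^-1).
  by rewrite det_mx22 !mxE -/a -/b -/c -/d !invfM; ring.
have cross : a * b - c * d = (x 0 - x 1) * (y 0 - y 1) by rewrite /a /b /c /d; ring.
rewrite !mulf_neq0 ?x_neq0 // subr_eq0.
apply: contraNneq (mulf_neq0 x01 y01) => /invr_inj ab_cd.
by rewrite -cross ab_cd subrr.
Qed.

Theorem lemma2p17 (F : finFieldType) (alpha : F)
  (halpha : (#|F|.-1).-primitive_root alpha)
  (f g : 'I_2 -> 'I_(#|F|.-1)) (hf : injective f) (hg : injective g) :
  mxsub f g (Pmx (#|F|.-1) alpha) \in unitmx.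
Proof.
set n := #|F|.-1; set x := fun s : 'I_n => alpha ^+ s.
have x_inj : injective x.
  by move=> s t /eqP; rewrite (eq_prim_root_expr halpha) !modn_small // => /eqP /val_inj.
have x_neq0 s : x s != 0.
  by rewrite expf_neq0 // (prim_root_eq0 halpha) -lt0n (prim_order_gt0 halpha).
have -> : mxsub f g (Pmx n alpha) = \matrix_(i, j) (x (f i) / (x (f i) - x (g j))).
  by apply/matrixP => i j; rewrite PmxE !mxE.
rewrite unitmxE unitfE.
exact: det_mx22_div_sub_neq0 (inj_comp x_inj hf) (inj_comp x_inj hg) (fun i => x_neq0 (f i)).
Qed.
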